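(* Let $K$ be a compact connected subgroup of $U(N)$ and $A\in\mathbb{C}^{N\times N}$. (a) The orbit $\mathcal{O}_K(A)$ is weakly rotationally symmetric if and only if $\mathcal{O}_K(A^\dagger)$ is weakly rotationally symmetric. (b) If $\mathcal{O}_K(A)$ is weakly rotationally symmetric, then so is $\mathcal{O}_K([[A,A^\dagger],A])$.
   Context: $\mathcal{O}_K(X)=\{UXU^\dagger\mid U\in K\}$; it is weakly rotationally symmetric if $e^{i\varphi}\mathcal{O}_K(X)=\mathcal{O}_K(X)$ for all $\varphi\in\mathbb{R}$. $[X,Y]=XY-YX$. *)

From HB Require Import structures.
From mathcomp Require Import all_boot all_order all_algebra.
From mathcomp Require Import all_classical all_reals all_analysis.
From mathcomp Require Import complex.
Set Implicit Arguments. Unset Strict Implicit. Unset Printing Implicit Defensive.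
Import GRing.Theory Num.Theory ComplexField numFieldNormedType.Exports.
Local Open Scope ring_scope.
Local Open Scope classical_set_scope.

(* The usual (modulus-metric) topology on C = R[i]; matrices 'M[R[i]]_N then
   carry the product topology, i.e. the standard topology of C^{N x N}. *)
HB.instance Definition _ (R : rcfType) := PseudoPointedMetric.copy R[i] (R[i])^o.

Definition dag (R : rcfType) (N : nat) (X : 'M[R[i]]_N) : 'M[R[i]]_N :=
  map_mx (fun z => z^*) X^T.

Definition comm_mx_op (R : rcfType) (N : nat) (X Y : 'M[R[i]]_N) : 'M[R[i]]_N :=
  X *m Y - Y *m X.

Definition unitary (R : rcfType) (N : nat) (U : 'M[R[i]]_N) : Prop :=
  U *m dag U = 1%:M.

Definition subgroup_of_UN (R : rcfType) (N : nat) (K : set 'M[R[i]]_N) : Prop :=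
  [/\ (forall U, K U -> unitary U),
      K 1%:M,
      (forall U V, K U -> K V -> K (U *m V)) &
      (forall U, K U -> K (invmx U))].

Definition orbitK (R : rcfType) (N : nat) (K : set 'M[R[i]]_N) (X : 'M[R[i]]_N)
  : set 'M[R[i]]_N :=
  [set U *m X *m dag U | U in K].

Definition expi (R : realType) (phi : R) : R[i] := (cos phi +i* sin phi)%C.

Definition weakly_rot_sym (R : realType) (N : nat) (S : set 'M[R[i]]_N) : Prop :=
  forall phi : R, [set expi phi *: Y | Y in S] = S.

From HB Require Import structures.
From mathcomp Require Import all_boot all_order all_algebra.
From mathcomp Require Import all_classical all_reals all_analysis.
From mathcomp Require Import complex.
Set Implicit Arguments. Unset Strict Implicit. Unset Printing Implicit Defensive.
Import GRing.Theory Num.Theory ComplexField numFieldNormedType.Exports.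
Local Open Scope ring_scope.
Local Open Scope classical_set_scope.

(* Both X |-> X^dagger and X |-> [[X, X^dagger], X] commute with unitary
   conjugation and turn a phase into a phase: e^{i phi} becomes e^{-i phi},
   resp. e^{i phi} e^{-i phi} e^{i phi} = e^{i phi}.  Any such map f sends a
   weakly rotationally symmetric orbit to another one: applying f to
   e^{i psi} U X U^dagger = W X W^dagger gives
   e^{i phi} U f(X) U^dagger = W f(X) W^dagger. *)

Section MatrixAdjoint.
Variables (R : rcfType) (N : nat).
Implicit Types (X Y U : 'M[R[i]]_N) (a b : R[i]).

Lemma dagK X : dag (dag X) = X.
Proof. by apply/matrixP => i j; rewrite !mxE conjCK. Qed.

Lemma dagM X Y : dag (X *m Y) = dag Y *m dag X.
Proof. by rewrite /dag trmx_mul map_mxM. Qed.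

Lemma dagZ a X : dag (a *: X) = a^* *: dag X.
Proof. by apply/matrixP => i j; rewrite !mxE rmorphM. Qed.

Lemma dag_conj U X : dag (U *m X *m dag U) = U *m dag X *m dag U.
Proof. by rewrite !dagM dagK mulmxA. Qed.

Lemma comm_mx_opZ a b X Y :
  comm_mx_op (a *: X) (b *: Y) = (a * b) *: comm_mx_op X Y.
Proof.
rewrite /comm_mx_op -!scalemxAl -!scalemxAr !scalerA.
by rewrite (mulrC b a) scalerBr.
Qed.

Lemma unitary_dagl U : unitary U -> dag U *m U = 1%:M.
Proof. exact: mulmx1C. Qed.

Lemma conj_mulmx U X Y : unitary U ->
  (U *m X *m dag U) *m (U *m Y *m dag U) = U *m (X *m Y) *m dag U.
Proof.
by move=> /unitary_dagl hU; rewrite -!mulmxA (mulmxA (dag U) U) hU mul1mx.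
Qed.

Lemma conj_comm_mx U X Y : unitary U ->
  comm_mx_op (U *m X *m dag U) (U *m Y *m dag U) =
  U *m comm_mx_op X Y *m dag U.
Proof. by move=> hU; rewrite /comm_mx_op !conj_mulmx // mulmxBr mulmxBl. Qed.

End MatrixAdjoint.

Section PhaseSymmetry.
Variables (R : realType) (N : nat).
Implicit Types (X Y U : 'M[R[i]]_N) (S : set 'M[R[i]]_N).

Lemma expi_conj (phi : R) : (expi phi)^* = expi (- phi).
Proof. by rewrite /expi cosN sinN. Qed.

Lemma expi_mulN (phi : R) : expi phi * expi (- phi) = 1.
Proof.
apply/eqP; rewrite /expi cosN sinN eq_complex /=; apply/andP; split; apply/eqP.
- by rewrite mulrN opprK -!expr2 cos2Dsin2.
- by rewrite mulrN mulrC addrC subrr.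
Qed.

Lemma expi_mul_conj (phi : R) : expi phi * (expi phi)^* = 1.
Proof. by rewrite expi_conj expi_mulN. Qed.

Lemma weakly_rot_symP S :
  weakly_rot_sym S <-> forall (phi : R) Y, S Y -> S (expi phi *: Y).
Proof.
split=> [symS phi Y SY | closedS phi]; first by rewrite -(symS phi); exists Y.
apply/seteqP; split=> [_ [Y SY <-] | Y SY]; first exact: closedS.
exists (expi (- phi) *: Y); first exact: closedS.
by rewrite scalerA expi_mulN scale1r.
Qed.

Variable K : set 'M[R[i]]_N.
Hypothesis K_unitary : forall {U}, K U -> unitary U.

Lemma weakly_rot_sym_orbit_map (f : 'M[R[i]]_N -> 'M[R[i]]_N) X :
  (forall U Y, unitary U -> f (U *m Y *m dag U) = U *m f Y *m dag U) ->
  (forall phi : R, exists psi : R, forall Y, f (expi psi *: Y) = expi phi *: f Y) ->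
  weakly_rot_sym (orbitK K X) -> weakly_rot_sym (orbitK K (f X)).
Proof.
move=> f_conj f_phase /weakly_rot_symP symX.
apply/weakly_rot_symP => phi _ [U KU <-].
have [psi f_psi] := f_phase phi.
have [W KW EW] : orbitK K X (expi psi *: (U *m X *m dag U)).
  by apply: symX; exists U.
exists W => //.
by rewrite -(f_conj _ _ (K_unitary KW)) EW f_psi (f_conj _ _ (K_unitary KU)).
Qed.

Lemma weakly_rot_sym_orbit_dag X :
  weakly_rot_sym (orbitK K X) -> weakly_rot_sym (orbitK K (dag X)).
Proof.
apply: weakly_rot_sym_orbit_map => [U Y _ | phi]; first exact: dag_conj.
by exists (- phi) => Y; rewrite dagZ expi_conj opprK.
Qed.

Lemma weakly_rot_sym_orbit_comm_comm_dag X :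
  weakly_rot_sym (orbitK K X) ->
  weakly_rot_sym (orbitK K (comm_mx_op (comm_mx_op X (dag X)) X)).
Proof.
apply: (weakly_rot_sym_orbit_map (f := fun Y => comm_mx_op (comm_mx_op Y (dag Y)) Y)).
  by move=> U Y hU; rewrite dag_conj !conj_comm_mx.
move=> phi; exists phi => Y.
by rewrite dagZ !comm_mx_opZ expi_mul_conj mul1r.
Qed.

End PhaseSymmetry.

Theorem corollary2p25 (R : realType) (N : nat) (K : set 'M[R[i]]_N)
  (hK : subgroup_of_UN K) (hcpt : compact K) (hconn : connected K)
  (A : 'M[R[i]]_N) :
  (weakly_rot_sym (orbitK K A) <-> weakly_rot_sym (orbitK K (dag A))) /\
  (weakly_rot_sym (orbitK K A) ->
     weakly_rot_sym (orbitK K (comm_mx_op (comm_mx_op A (dag A)) A))).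
Proof.
have [K_unitary _ _ _] := hK.
have dag_sym := weakly_rot_sym_orbit_dag K_unitary.
split; last exact: (weakly_rot_sym_orbit_comm_comm_dag K_unitary).
by split=> [|/dag_sym]; [exact: dag_sym | rewrite dagK].
Qed.
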